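(* Let $U\in\mathbb{R}^{n\times a}$ and $\Pi\in\mathbb{R}^{n\times b}$ be such that the concatenation $[U\,|\,\Pi]$ has orthonormal columns, let $\alpha\in[0,1/7]$, and let $S\in\mathbb{R}^{k\times n}$ be an $\alpha$-distortion subspace embedding for $[U\,|\,\Pi]$. Let $M\in\mathbb{R}^{k\times k}$ be symmetric, let $P$ be the orthogonal projection onto the column space of $SU$, and $P^\perp=I-P$. Then for every nonzero $x\in\mathbb{R}^b$, $P^\perp S\Pi x\ne0$ and $$\left|\frac{(P^\perp S\Pi x)^TM(P^\perp S\Pi x)}{\|P^\perp S\Pi x\|^2}-\frac{(S\Pi x)^TM(S\Pi x)}{\|S\Pi x\|^2}\right|\le10\alpha\|M\|.$$
   Context: $S$ is an $\alpha$-distortion subspace embedding for $X\in\mathbb{R}^{n\times m}$ if $(1-\alpha)\|Xv\|^2\le\|SXv\|^2\le(1+\alpha)\|Xv\|^2$ for all $v\in\mathbb{R}^m$. $\|M\|$ is the operator norm. *)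

From HB Require Import structures.
From mathcomp Require Import all_boot all_order all_algebra.
From mathcomp Require Import boolp classical_sets reals.
Set Implicit Arguments. Unset Strict Implicit. Unset Printing Implicit Defensive.
Import Order.TTheory GRing.Theory Num.Theory.
Local Open Scope ring_scope.
Local Open Scope classical_set_scope.

Definition vnormsq (R : realType) (n : nat) (v : 'cV[R]_n) : R :=
  \sum_(i < n) v i 0 ^+ 2.

Definition vnorm (R : realType) (n : nat) (v : 'cV[R]_n) : R :=
  Num.sqrt (vnormsq v).

Definition opnorm (R : realType) (m n : nat) (M : 'M[R]_(m, n)) : R :=
  sup [set vnorm (M *m v) | v in [set v : 'cV[R]_n | vnorm v <= 1]].

Definition orthonormal_cols (R : realType) (n m : nat) (X : 'M[R]_(n, m)) :=
  X^T *m X = 1%:M.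

Definition subspace_embedding (R : realType) (k n m : nat) (alpha : R)
    (S : 'M[R]_(k, n)) (X : 'M[R]_(n, m)) :=
  forall v : 'cV[R]_m,
    (1 - alpha) * vnormsq (X *m v) <= vnormsq (S *m (X *m v)) /\
    vnormsq (S *m (X *m v)) <= (1 + alpha) * vnormsq (X *m v).

(* P is the orthogonal projection onto the column space of A:
   symmetric, idempotent, with the same column space as A
   (column spaces expressed as row spaces of transposes). *)
Definition orth_proj_onto (R : realType) (k a : nat)
    (P : 'M[R]_k) (A : 'M[R]_(k, a)) :=
  P^T = P /\ P *m P = P /\ (P^T == A^T)%MS.

Definition rayleigh (R : realType) (k : nat) (M : 'M[R]_k) (v : 'cV[R]_k) : R :=
  (v^T *m M *m v) 0 0 / vnormsq v.

From HB Require Import structures.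
From mathcomp Require Import all_boot all_order all_algebra.
From mathcomp Require Import boolp classical_sets reals.
From mathcomp Require Import ring lra.
Import Order.TTheory GRing.Theory Num.Theory.
Local Open Scope ring_scope.
Set Implicit Arguments. Unset Strict Implicit.

(* Write w = S Pi x, z = P w and y = w - z, so that w = y + z with y orthogonal
   to z.  Since z = S U c for some c and U c is orthogonal to Pi x, the
   embedding preserves that orthogonality up to alpha (by polarization):
   (1 - alpha) <z, w> <= alpha |z| |w|; as <z, w> = |z|^2 this gives
   |z| <= 7/6 alpha |w|.  Removing from w an orthogonal component z with
   |z| <= rho |w| moves the Rayleigh quotient by at most 2 rho (1 + rho) ||M||,
   which is below 10 alpha ||M|| for rho = 7/6 alpha. *)

Section VectorGeometry.
Variable R : realType.

Definition vdot n (u v : 'cV[R]_n) : R := (u^T *m v) 0 0.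

Lemma vdotE n (u v : 'cV[R]_n) : vdot u v = \sum_i u i 0 * v i 0.
Proof. by rewrite /vdot mxE; apply: eq_bigr => i _; rewrite mxE. Qed.

Lemma vnormsqE n (v : 'cV[R]_n) : vnormsq v = vdot v v.
Proof. by rewrite vdotE /vnormsq; apply: eq_bigr => i _; rewrite expr2. Qed.

Lemma vdotC n (u v : 'cV[R]_n) : vdot u v = vdot v u.
Proof. by rewrite !vdotE; apply: eq_bigr => i _; rewrite mulrC. Qed.

Lemma vdotDl n (u v w : 'cV[R]_n) : vdot (u + v) w = vdot u w + vdot v w.
Proof. by rewrite /vdot linearD mulmxDl mxE. Qed.

Lemma vdotZl n c (u w : 'cV[R]_n) : vdot (c *: u) w = c * vdot u w.
Proof. by rewrite /vdot linearZ -scalemxAl mxE. Qed.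

Lemma vdotNl n (u w : 'cV[R]_n) : vdot (- u) w = - vdot u w.
Proof. by rewrite -scaleN1r vdotZl mulN1r. Qed.

Lemma vdotDr n (u v w : 'cV[R]_n) : vdot w (u + v) = vdot w u + vdot w v.
Proof. by rewrite vdotC vdotDl !(vdotC w). Qed.

Lemma vdotZr n c (u w : 'cV[R]_n) : vdot w (c *: u) = c * vdot w u.
Proof. by rewrite vdotC vdotZl vdotC. Qed.

Lemma vdot0r n (w : 'cV[R]_n) : vdot w 0 = 0.
Proof. by rewrite /vdot mulmx0 mxE. Qed.

Lemma vdot0l n (w : 'cV[R]_n) : vdot 0 w = 0.
Proof. by rewrite vdotC vdot0r. Qed.

Lemma vdot_mulmxl m n (A : 'M[R]_(m, n)) u v : vdot (A *m u) v = vdot u (A^T *m v).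
Proof. by rewrite /vdot trmx_mul mulmxA. Qed.

Lemma vnormsq_ge0 n (v : 'cV[R]_n) : 0 <= vnormsq v.
Proof. by apply: sumr_ge0 => i _; apply: sqr_ge0. Qed.

Lemma vnormsq0 n : vnormsq (0 : 'cV[R]_n) = 0.
Proof. by rewrite vnormsqE vdot0r. Qed.

Lemma vnormsq_eq0 n (v : 'cV[R]_n) : (vnormsq v == 0) = (v == 0).
Proof.
apply/idP/idP => [/eqP h|/eqP->]; last by rewrite vnormsq0.
apply/eqP/matrixP => i j; rewrite ord1 mxE.
apply/eqP; rewrite -sqrf_eq0; apply/eqP.
exact: (psumr_eq0P (fun i _ => sqr_ge0 (v i 0)) h).
Qed.

Lemma vnormsq_gt0 n (v : 'cV[R]_n) : (0 < vnormsq v) = (v != 0).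
Proof. by rewrite lt_def vnormsq_ge0 vnormsq_eq0 andbT. Qed.

Lemma vnorm_ge0 n (v : 'cV[R]_n) : 0 <= vnorm v.
Proof. exact: sqrtr_ge0. Qed.

Lemma vnorm0 n : vnorm (0 : 'cV[R]_n) = 0.
Proof. by rewrite /vnorm vnormsq0 sqrtr0. Qed.

Lemma vnorm_gt0 n (v : 'cV[R]_n) : (0 < vnorm v) = (v != 0).
Proof. by rewrite sqrtr_gt0 vnormsq_gt0. Qed.

Lemma vnorm_sqr n (v : 'cV[R]_n) : vnorm v ^+ 2 = vnormsq v.
Proof. by rewrite sqr_sqrtr // vnormsq_ge0. Qed.

Lemma vnormsqZ n c (v : 'cV[R]_n) : vnormsq (c *: v) = c ^+ 2 * vnormsq v.
Proof. by rewrite !vnormsqE vdotZl vdotZr mulrA expr2. Qed.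

Lemma vnormZ n c (v : 'cV[R]_n) : vnorm (c *: v) = `|c| * vnorm v.
Proof. by rewrite /vnorm vnormsqZ sqrtrM ?sqr_ge0 // sqrtr_sqr. Qed.

Lemma vnormsq_lin2 n s t (p q : 'cV[R]_n) :
  vnormsq (s *: p + t *: q)
  = s ^+ 2 * vnormsq p + 2 * s * t * vdot p q + t ^+ 2 * vnormsq q.
Proof.
rewrite !vnormsqE !(vdotDl, vdotDr, vdotZl, vdotZr) (vdotC q p); ring.
Qed.

Lemma vnormsqD_orth n (y z : 'cV[R]_n) :
  vdot y z = 0 -> vnormsq (y + z) = vnormsq y + vnormsq z.
Proof.
by move=> yz; rewrite !vnormsqE vdotDl !vdotDr (vdotC z y) yz addr0 add0r.
Qed.

Lemma vnormsq_col_mx m1 m2 (c : 'cV[R]_m1) (d : 'cV[R]_m2) :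
  vnormsq (col_mx c d) = vnormsq c + vnormsq d.
Proof.
by rewrite /vnormsq big_split_ord; congr (_ + _); apply: eq_bigr => i _;
  rewrite ?col_mxEu ?col_mxEd.
Qed.

Lemma vdot_col_mx m1 m2 (c c' : 'cV[R]_m1) (d d' : 'cV[R]_m2) :
  vdot (col_mx c d) (col_mx c' d') = vdot c c' + vdot d d'.
Proof. by rewrite /vdot tr_col_mx mul_row_col mxE. Qed.

Lemma vdot_sqr_le n (u v : 'cV[R]_n) : vdot u v ^+ 2 <= vnormsq u * vnormsq v.
Proof.
have [->|vn0] := eqVneq v 0; first by rewrite vdot0r expr0n mulr_ge0 ?vnormsq_ge0.
have Vp : 0 < vnormsq v by rewrite vnormsq_gt0.
have := vnormsq_ge0 (vnormsq v *: u + (- vdot u v) *: v).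
rewrite vnormsq_lin2 => h.
have : 0 <= vnormsq v * (vnormsq u * vnormsq v - vdot u v ^+ 2) by nra.
by rewrite pmulr_rge0 // subr_ge0.
Qed.

Lemma normr_vdot_le n (u v : 'cV[R]_n) : `|vdot u v| <= vnorm u * vnorm v.
Proof.
rewrite /vnorm -sqrtrM ?vnormsq_ge0 // -sqrtr_sqr ler_sqrt ?vdot_sqr_le //.
by rewrite mulr_ge0 ?vnormsq_ge0.
Qed.

End VectorGeometry.

Section OperatorNorm.
Variables (R : realType) (m n : nat) (A : 'M[R]_(m, n)).

Let unit_image := [set vnorm (A *m v) | v in [set v : 'cV[R]_n | vnorm v <= 1]]%classic.

(* The Frobenius norm bounds the image of the unit ball. *)
Lemma opnorm_has_ubound : has_ubound unit_image.
Proof.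
set K := \sum_i vnormsq (row i A)^T.
exists (Num.sqrt K) => _ [v /= v1 <-]; rewrite /vnorm ler_sqrt; last first.
  by apply: sumr_ge0 => i _; apply: vnormsq_ge0.
have v1' : vnormsq v <= 1.
  by rewrite -vnorm_sqr -(expr1n _ 2) lerXn2r // ?nnegrE ?vnorm_ge0.
apply: le_trans (_ : K * vnormsq v <= K); last first.
  by rewrite ler_piMr // sumr_ge0 // => i _; apply: vnormsq_ge0.
rewrite [X in X <= _]/vnormsq mulr_suml; apply: ler_sum => i _.
have -> : (A *m v) i 0 = vdot (row i A)^T v by rewrite /vdot trmxK -row_mul [RHS]mxE.
exact: vdot_sqr_le.
Qed.

Lemma opnorm_ge0 : 0 <= opnorm A.
Proof.
have img0 : unit_image 0 by exists 0; rewrite /= ?mulmx0 vnorm0 ?ler01.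
exact: (ub_le_sup opnorm_has_ubound img0).
Qed.

Lemma opnorm_mulmx_le v : vnorm (A *m v) <= opnorm A * vnorm v.
Proof.
have [->|vn0] := eqVneq v 0.
  by rewrite mulmx0 !vnorm0 mulr0.
have Np : 0 < vnorm v by rewrite vnorm_gt0.
have inE : unit_image (vnorm (A *m ((vnorm v)^-1 *: v))).
  exists ((vnorm v)^-1 *: v) => //=.
  by rewrite vnormZ ger0_norm ?invr_ge0 ?vnorm_ge0 // mulVf ?gt_eqF.
have := ub_le_sup opnorm_has_ubound inE.
rewrite -scalemxAr vnormZ ger0_norm ?invr_ge0 ?vnorm_ge0 //.
by rewrite ler_pdivrMl // mulrC.
Qed.

End OperatorNorm.

Lemma normr_quad_le (R : realType) n (M : 'M[R]_n) u v :
  `|vdot u (M *m v)| <= opnorm M * (vnorm u * vnorm v).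
Proof.
apply: le_trans (normr_vdot_le _ _) _.
by rewrite mulrCA ler_wpM2l ?vnorm_ge0 ?opnorm_mulmx_le.
Qed.

Lemma orth_proj_onto_mulmx (R : realType) k a (P : 'M[R]_k) (A : 'M[R]_(k, a)) :
  orth_proj_onto P A -> exists D : 'M[R]_(a, k), P = A *m D.
Proof.
case=> _ [_ /andP[/submxP[D PD] _]].
by exists D^T; rewrite -[P]trmxK PD trmx_mul trmxK.
Qed.

Section OrthogonalProjection.
Variables (R : realType) (k : nat) (P : 'M[R]_k).
Hypotheses (sP : P^T = P) (iP : P *m P = P).

Lemma orth_proj_vdot w : vdot (P *m w) w = vnormsq (P *m w).
Proof. by rewrite vnormsqE [RHS]vdot_mulmxl mulmxA sP iP vdotC. Qed.

Lemma orth_proj_vdot_compl w : vdot ((1%:M - P) *m w) (P *m w) = 0.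
Proof. by rewrite mulmxBl mul1mx vdotDl vdotNl vdotC orth_proj_vdot vnormsqE subrr. Qed.

End OrthogonalProjection.

Section SubspaceEmbedding.
Variables (R : realType) (k n m : nat) (alpha : R).
Variables (S : 'M[R]_(k, n)) (X : 'M[R]_(n, m)).
Hypotheses (onX : orthonormal_cols X) (embS : subspace_embedding alpha S X).

Lemma orthonormal_cols_vnormsq v : vnormsq (X *m v) = vnormsq v.
Proof. by rewrite !vnormsqE vdot_mulmxl mulmxA onX mul1mx. Qed.

Lemma subspace_embedding_vnormsq_ge v :
  (1 - alpha) * vnormsq v <= vnormsq (S *m (X *m v)).
Proof. by rewrite -orthonormal_cols_vnormsq; case: (embS v). Qed.

Lemma subspace_embedding_vnorm_ge v :
  alpha <= 1 -> Num.sqrt (1 - alpha) * vnorm v <= vnorm (S *m (X *m v)).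
Proof.
move=> a1; rewrite /vnorm -sqrtrM ?subr_ge0 // ler_sqrt ?vnormsq_ge0 //.
exact: subspace_embedding_vnormsq_ge.
Qed.

Lemma subspace_embedding_vnorm_gt0 v :
  alpha < 1 -> v != 0 -> 0 < vnorm (S *m (X *m v)).
Proof.
rewrite vnorm_gt0 -vnormsq_gt0 -(vnormsq_gt0 v) => a1 vp.
apply: lt_le_trans (subspace_embedding_vnormsq_ge v).
by rewrite mulr_gt0 // subr_gt0.
Qed.

(* Polarization: compare the embedding inequalities at s u + t v and s u - t v,
   then take s = |v| and t = |u|. *)
Lemma subspace_embedding_vdot u v :
  `|vdot (S *m (X *m u)) (S *m (X *m v)) - vdot u v| <= alpha * vnorm u * vnorm v.
Proof.
set B := vdot _ _; set d := vdot u v.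
have polar s t :
    4 * s * t * (B - d) <= 2 * alpha * (s ^+ 2 * vnormsq u + t ^+ 2 * vnormsq v).
  have [_ up] := embS (s *: u + t *: v).
  have [lo _] := embS (s *: u + (- t) *: v).
  move: up lo; rewrite !orthonormal_cols_vnormsq !mulmxDr -!scalemxAr !vnormsq_lin2.
  rewrite sqrrN /B /d; lra.
set nu := vnorm u; set nv := vnorm v.
have [u0|un0] := eqVneq u 0.
  by rewrite /B /d /nu u0 !mulmx0 !vdot0l vnorm0 subrr normr0 mulr0 mul0r.
have [v0|vn0] := eqVneq v 0.
  by rewrite /B /d /nv v0 !mulmx0 !vdot0r vnorm0 subrr normr0 mulr0.
have nup : 0 < nu by rewrite vnorm_gt0.
have nvp : 0 < nv by rewrite vnorm_gt0.
have h1 := polar nv nu; have h2 := polar nv (- nu).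
rewrite -!vnorm_sqr -/nu -/nv sqrrN in h1 h2.
have uv : 0 < nu * nv by rewrite mulr_gt0.
rewrite ler_norml; apply/andP; split; nra.
Qed.

End SubspaceEmbedding.

Lemma subspace_embedding_row_mx_vdot (R : realType) (k n a b : nat) (alpha : R)
    (S : 'M[R]_(k, n)) (U : 'M[R]_(n, a)) (Pi : 'M[R]_(n, b)) c x :
  orthonormal_cols (row_mx U Pi) -> subspace_embedding alpha S (row_mx U Pi) ->
  0 <= alpha <= 1 ->
  (1 - alpha) * `|vdot (S *m (U *m c)) (S *m (Pi *m x))|
    <= alpha * (vnorm (S *m (U *m c)) * vnorm (S *m (Pi *m x))).
Proof.
move=> onX embS /andP[a0 a1].
have XcE : row_mx U Pi *m col_mx c 0 = U *m c by rewrite mul_row_col mulmx0 addr0.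
have XxE : row_mx U Pi *m col_mx 0 x = Pi *m x by rewrite mul_row_col mulmx0 add0r.
have ncE : vnorm (col_mx c (0 : 'cV_b)) = vnorm c.
  by rewrite /vnorm vnormsq_col_mx vnormsq0 addr0.
have nxE : vnorm (col_mx (0 : 'cV_a) x) = vnorm x.
  by rewrite /vnorm vnormsq_col_mx vnormsq0 add0r.
have := subspace_embedding_vdot onX embS (col_mx c 0) (col_mx 0 x).
rewrite XcE XxE vdot_col_mx vdot0r vdot0l addr0 subr0 ncE nxE => cross.
have := subspace_embedding_vnorm_ge onX embS (col_mx c 0) a1.
have := subspace_embedding_vnorm_ge onX embS (col_mx 0 x) a1.
rewrite XcE XxE ncE nxE => hx hc.
have s0 := sqrtr_ge0 (1 - alpha).
have prod := ler_pM (mulr_ge0 s0 (vnorm_ge0 c)) (mulr_ge0 s0 (vnorm_ge0 x)) hc hx.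
rewrite mulrACA -expr2 sqr_sqrtr ?subr_ge0 // in prod.
have := ler_wpM2l (_ : 0 <= 1 - alpha) cross; rewrite subr_ge0 => /(_ a1); nra.
Qed.

Lemma subspace_embedding_orth_proj_le (R : realType) (k n a b : nat) (alpha : R)
    (S : 'M[R]_(k, n)) (U : 'M[R]_(n, a)) (Pi : 'M[R]_(n, b)) (P : 'M[R]_k) x :
  orthonormal_cols (row_mx U Pi) -> subspace_embedding alpha S (row_mx U Pi) ->
  0 <= alpha <= 1 -> orth_proj_onto P (S *m U) ->
  (1 - alpha) * vnorm (P *m (S *m (Pi *m x))) <= alpha * vnorm (S *m (Pi *m x)).
Proof.
move=> onX embS a01 projP; have /andP[a0 _] := a01.
have [sP [iP _]] := projP; have [D PE] := orth_proj_onto_mulmx projP.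
set w := S *m (Pi *m x).
have := subspace_embedding_row_mx_vdot (D *m w) x onX embS a01.
have -> : S *m (U *m (D *m w)) = P *m w by rewrite PE !mulmxA.
rewrite orth_proj_vdot // ger0_norm ?vnormsq_ge0 // -vnorm_sqr.
have [->|zn0] := eqVneq (vnorm (P *m w)) 0.
  by rewrite mulr0 => _; rewrite mulr_ge0 ?vnorm_ge0.
have szp : 0 < vnorm (P *m w) by rewrite lt_def zn0 vnorm_ge0.
by move=> h; rewrite -(ler_pM2r szp); nra.
Qed.

Lemma rayleighE (R : realType) n (M : 'M[R]_n) (v : 'cV[R]_n) :
  rayleigh M v = vdot v (M *m v) / vnormsq v.
Proof. by rewrite /rayleigh /vdot mulmxA. Qed.

Lemma vdot_quad_symmetric (R : realType) n (M : 'M[R]_n) (u v : 'cV[R]_n) :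
  M^T = M -> vdot v (M *m u) = vdot u (M *m v).
Proof. by move=> sM; rewrite vdotC vdot_mulmxl sM. Qed.

Lemma rayleigh_orthD_le (R : realType) n (M : 'M[R]_n) (y z : 'cV[R]_n) (rho : R) :
  M^T = M -> vdot y z = 0 -> y != 0 -> vnorm z <= rho * vnorm (y + z) ->
  `|rayleigh M y - rayleigh M (y + z)| <= 2 * rho * (1 + rho) * opnorm M.
Proof.
move=> sM yz yn0 hz.
set m := opnorm M; set Y := vnormsq y; set Z := vnormsq z; set W := vnormsq (y + z).
set Qy := vdot y (M *m y); set Qz := vdot z (M *m z); set B := vdot y (M *m z).
have WE : W = Y + Z := vnormsqD_orth yz.
have Z0 : 0 <= Z := vnormsq_ge0 z.
have Yp : 0 < Y by rewrite vnormsq_gt0.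
have Wp : 0 < W by rewrite WE; lra.
have QwE : vdot (y + z) (M *m (y + z)) = Qy + 2 * B + Qz.
  rewrite mulmxDr !vdotDl !vdotDr (vdot_quad_symmetric y z sM) -/Qy -/Qz -/B; ring.
have -> : rayleigh M y - rayleigh M (y + z) = (Qy * Z - (2 * B + Qz) * Y) / (Y * W).
  rewrite !rayleighE QwE -/Qy -/Y -/W WE.
  by field; rewrite -WE !gt_eqF.
rewrite normrM normfV (gtr0_norm (mulr_gt0 Yp Wp)) ler_pdivrMr ?mulr_gt0 //.
have bQy := normr_quad_le M y y; have bQz := normr_quad_le M z z.
have bB := normr_quad_le M y z.
rewrite -/Qy -/Qz -/B -/m -?expr2 ?vnorm_sqr -/Y -/Z in bQy bQz bB.
have m0 : 0 <= m := opnorm_ge0 M.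
have num : `|Qy * Z - (2 * B + Qz) * Y| <= m * Y * (2 * Z + 2 * (vnorm y * vnorm z)).
  apply: le_trans (ler_normB _ _) _.
  rewrite !normrM (ger0_norm Z0) (gtr0_norm Yp).
  have h2 : `|2 * B + Qz| <= 2 * `|B| + `|Qz|.
    by apply: le_trans (ler_normD _ _) _; rewrite normrM ger0_norm.
  nra.
have key : Z + vnorm y * vnorm z <= rho * (1 + rho) * W.
  have sy0 := vnorm_ge0 y; have sz0 := vnorm_ge0 z.
  have yw : vnorm y <= vnorm (y + z).
    by rewrite -(ler_sqr (vnorm_ge0 _) (vnorm_ge0 _)) !vnorm_sqr -/Y -/W WE lerDl.
  rewrite /Z /W -!vnorm_sqr; nra.
apply: le_trans num _; have := mulr_ge0 m0 (ltW Yp); nra.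
Qed.

Theorem mainTheorem13 (R : realType) (n a b k : nat)
    (U : 'M[R]_(n, a)) (Pi : 'M[R]_(n, b)) (alpha : R)
    (S : 'M[R]_(k, n)) (M : 'M[R]_k) (P : 'M[R]_k) :
  orthonormal_cols (row_mx U Pi) ->
  0 <= alpha -> alpha <= 1 / 7 ->
  subspace_embedding alpha S (row_mx U Pi) ->
  M^T = M ->
  orth_proj_onto P (S *m U) ->
  forall x : 'cV[R]_b, x != 0 ->
    let y := (1%:M - P) *m (S *m (Pi *m x)) in
    y != 0 /\
    `| rayleigh M y - rayleigh M (S *m (Pi *m x)) | <= 10 * alpha * opnorm M.
Proof.
move=> onX a0 a7 embS sM projP x xn0 y.
set w := S *m (Pi *m x); set z := P *m w.
have wE : w = y + z by rewrite /y mulmxBl mul1mx subrK.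
have [sP [iP _]] := projP.
have yz : vdot y z = 0 := orth_proj_vdot_compl sP iP w.
have a1 : 0 <= alpha <= 1 by rewrite a0 /=; lra.
have hz : vnorm z <= 7 / 6 * alpha * vnorm w.
  have := subspace_embedding_orth_proj_le x onX embS a1 projP.
  have := vnorm_ge0 z; rewrite -/w; nra.
have wp : 0 < vnorm w.
  have := subspace_embedding_vnorm_gt0 onX embS (_ : alpha < 1) (_ : col_mx 0 x != 0).
  rewrite mul_row_col mulmx0 add0r col_mx_eq0 eqxx xn0; apply; lra.
have yn0 : y != 0.
  apply: contraTneq hz => y0.
  have wz : vnorm w = vnorm z by rewrite wE y0 add0r.
  rewrite -ltNge -wz; nra.
split=> //.
rewrite wE; apply: le_trans (rayleigh_orthD_le sM yz yn0 (rho := 7 / 6 * alpha) _) _.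
  by rewrite -wE.
have := mulr_ge0 a0 (opnorm_ge0 M); nra.
Qed.
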